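(* Let $\mathrm{k}$ be an infinite field and $\mathcal{A}$ a unital associative $\mathrm{k}$-algebra satisfying $\mathbf{H}_{\mathrm{s}}$. Let $A$ be a finite subset of $\mathcal{A}$ with $A\cap U(\mathcal{A})\neq\emptyset$. Then the $\mathrm{k}$-subspace $\mathrm{k}\langle A\rangle$ admits a basis consisting of invertible elements of $\mathcal{A}$.
   Context: $U(\mathcal{A})$ is the group of invertible elements; $\mathrm{k}\langle A\rangle$ is the linear span of $A$. Hypothesis $\mathbf{H}_{\mathrm{s}}$: $\mathcal{A}$ is finite-dimensional over $\mathrm{k}$, or $\mathrm{k}\in\{\mathbb{R},\mathbb{C}\}$ and $\mathcal{A}$ is a Banach algebra over $\mathrm{k}$, or $\mathcal{A}$ is a finite product of field extensions of $\mathrm{k}$. *)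

From HB Require Import structures.
From mathcomp Require Import all_boot all_order all_algebra.
From mathcomp Require Import reals.
From mathcomp.real_closed Require Import complex.

Set Implicit Arguments.
Unset Strict Implicit.
Unset Printing Implicit Defensive.
Import Order.TTheory GRing.Theory Num.Theory.
Local Open Scope ring_scope.

Definition infinite_field (k : fieldType) : Prop :=
  forall s : seq k, exists x : k, x \notin s.

Definition in_span (k : fieldType) (V : lmodType k) (s : seq V) (x : V) : Prop :=
  exists c : 'I_(size s) -> k, x = \sum_(i < size s) c i *: s`_i.

Definition lin_free (k : fieldType) (V : lmodType k) (s : seq V) : Prop :=
  forall c : 'I_(size s) -> k,
    \sum_(i < size s) c i *: s`_i = 0 -> forall i, c i = 0.

Definition finite_dim (k : fieldType) (V : lmodType k) : Prop :=
  exists n (v : 'I_n -> V), forall x : V,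
    exists c : 'I_n -> k, x = \sum_(i < n) c i *: v i.

Definition cmod (R : realType) (z : R[i]) : R :=
  Num.sqrt (complex.Re z ^+ 2 + complex.Im z ^+ 2).

Definition k_is_R_or_C (k : fieldType) (R : realType) (absk : k -> R) : Prop :=
  (exists phi : {rmorphism k -> R}, bijective phi /\
      forall c, absk c = `|phi c|)
  \/
  (exists psi : {rmorphism k -> R[i]}, bijective psi /\
      forall c, absk c = cmod (psi c)).

Definition banach_algebra (k : fieldType) (Alg : unitAlgType k) : Prop :=
  exists (R : realType) (absk : k -> R) (N : Alg -> R),
    k_is_R_or_C absk /\
    (forall x, 0 <= N x) /\
    (forall x, N x = 0 -> x = 0) /\
    (forall x y, N (x + y) <= N x + N y) /\
    (forall (c : k) x, N (c *: x) = absk c * N x) /\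
    (forall x y, N (x * y) <= N x * N y) /\
    (forall u : nat -> Alg,
        (forall e : R, 0 < e -> exists M, forall m n, (M <= m)%N -> (M <= n)%N ->
             N (u m - u n) < e) ->
        exists l : Alg, forall e : R, 0 < e -> exists M, forall n, (M <= n)%N ->
             N (u n - l) < e).

(* (3) Alg is isomorphic, as a unital k-algebra, to a finite product of
   field extensions K_0, ..., K_{n-1} of k. *)
Definition prod_field_ext (k : fieldType) (Alg : unitAlgType k) : Prop :=
  exists (n : nat) (K : 'I_n -> comUnitAlgType k)
         (f : Alg -> forall i, K i),
    (forall i (x : K i), x != 0 -> x \is a GRing.unit) /\
    (forall x y i, f (x + y) i = f x i + f y i) /\
    (forall x y i, f (x * y) i = f x i * f y i) /\
    (forall (c : k) x i, f (c *: x) i = c *: f x i) /\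
    (forall i, f 1 i = 1) /\
    (forall x y, (forall i, f x i = f y i) -> x = y) /\
    (forall g : forall i, K i, exists x, forall i, f x i = g i).

Definition Hs (k : fieldType) (Alg : unitAlgType k) : Prop :=
  finite_dim Alg \/ banach_algebra Alg \/ prod_field_ext Alg.

From HB Require Import structures.
From mathcomp Require Import all_boot all_order all_algebra.
From mathcomp Require Import reals.
From mathcomp.real_closed Require Import complex.
From mathcomp Require Import ring lra.
From Stdlib Require Import Classical.

Set Implicit Arguments.
Unset Strict Implicit.
Unset Printing Implicit Defensive.
Import Order.TTheory GRing.Theory Num.Theory.
Local Open Scope ring_scope.

(* Fix a unit u in A.  Suppose every w admits a scalar t != 0 with 1 + t w
   invertible.  Then each a in A can be replaced by the unit
   u + t a = u (1 + t u^-1 a) without changing the span, and any basis extracted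
   from u and these units consists of units.  Each alternative of H_s gives this
   perturbation property: in a finite-dimensional algebra w is algebraic, so
   w - l is a unit whenever l is not a root of an annihilating polynomial; in a
   Banach algebra 1 + t w is inverted by a Neumann series once |t| N(w) <= 1/2;
   in a finite product of fields 1 + t w is a non-unit for at most one t per
   factor, and k is infinite. *)

Section Span.
Variables (k : fieldType) (V : lmodType k).
Implicit Types (s t : seq V) (x y : V).

Lemma span0 s : in_span s 0.
Proof. by exists (fun=> 0); rewrite big1 // => i _; rewrite scale0r. Qed.

Lemma spanD s x y : in_span s x -> in_span s y -> in_span s (x + y).
Proof.
move=> [c ->] [d ->]; exists (fun i => c i + d i).
by rewrite -big_split /=; apply: eq_bigr => i _; rewrite scalerDl.
Qed.

Lemma spanZ s a x : in_span s x -> in_span s (a *: x).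
Proof.
move=> [c ->]; exists (fun i => a * c i).
by rewrite scaler_sumr; apply: eq_bigr => i _; rewrite scalerA.
Qed.

Lemma spanB s x y : in_span s x -> in_span s y -> in_span s (x - y).
Proof. by move=> sx sy; rewrite -scaleN1r; apply/spanD/spanZ. Qed.

Lemma span_mem s x : x \in s -> in_span s x.
Proof.
move=> xs; pose i0 := Ordinal (etrans (index_mem _ _) xs).
exists (fun i => (i == i0)%:R).
rewrite (bigD1 i0) //= eqxx scale1r big1 ?addr0 ?nth_index //.
by move=> i /negbTE ->; rewrite scale0r.
Qed.

Lemma span_trans s t x :
  (forall y, y \in s -> in_span t y) -> in_span s x -> in_span t x.
Proof.
move=> st [c ->]; apply: (big_ind (in_span t)); [exact: span0|exact: spanD|].
by move=> i _; apply/spanZ/st/mem_nth.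
Qed.

Lemma span_subset s t x : {subset s <= t} -> in_span s x -> in_span t x.
Proof. by move=> st; apply: span_trans => y /st; apply: span_mem. Qed.

Lemma lin_free_cons a s : lin_free s -> ~ in_span s a -> lin_free (a :: s).
Proof.
move=> fs na c; rewrite big_ord_recl /= => hc.
have c0 : c ord0 = 0.
  have [//|nz] := eqVneq (c ord0) 0; case: na.
  have -> : a = - (c ord0)^-1 *: \sum_(i < size s) c (lift ord0 i) *: s`_i.
    move/eqP: (hc); rewrite addrC addr_eq0 => /eqP ->.
    by rewrite scalerN scaleNr opprK scalerA mulVf ?scale1r.
  by apply: spanZ; exists (c \o lift ord0).
have cS i : c (lift ord0 i) = 0.
  by apply: (fs (c \o lift ord0)); move: hc; rewrite c0 scale0r add0r.
by move=> i; case: (unliftP ord0 i) => [j|] ->.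
Qed.

Lemma lin_free_extension (A S : seq V) : lin_free S ->
  exists R, [/\ lin_free (R ++ S), {subset R <= A} &
                forall x, x \in A -> in_span (R ++ S) x].
Proof.
elim: A S => [|a A IH] S fS; first by exists [::].
have subA R : {subset R <= A} -> {subset R <= a :: A}.
  by move=> RA x /RA xA; rewrite inE xA orbT.
have [aS|aNS] := classic (in_span S a).
  have [R [fR /subA RA spanR]] := IH S fS; exists R; split => // x.
  rewrite inE => /predU1P [->|/spanR //]; apply: (span_subset _ aS) => y yS.
  by rewrite mem_cat yS orbT.
have [R [fR RA spanR]] := IH (a :: S) (lin_free_cons fS aNS).
exists (rcons R a); rewrite cat_rcons; split=> // [x|x].
  by rewrite mem_rcons inE => /predU1P [->|/RA xA]; rewrite inE ?eqxx ?xA ?orbT.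
rewrite inE => /predU1P [->|/spanR //].
by apply: span_mem; rewrite mem_cat inE eqxx orbT.
Qed.

End Span.

Definition unit_perturbable (k : fieldType) (Alg : unitAlgType k) : Prop :=
  forall w : Alg, exists2 t : k, t != 0 & 1 + t *: w \is a GRing.unit.

Section UnitBasis.
Variables (k : fieldType) (Alg : unitAlgType k).
Hypothesis perturbable : unit_perturbable Alg.

Lemma unit_perturbation (u : Alg) (A : seq Alg) : u \is a GRing.unit ->
  exists A', [/\ forall b, b \in A' -> b \is a GRing.unit,
                 forall a, a \in A -> in_span (u :: A') a &
                 forall b, b \in A' -> in_span (u :: A) b].
Proof.
move=> uU; elim: A => [|a A [A' [A'U spanA spanA']]]; first by exists [::].
have [t t0 tU] := perturbable (u^-1 * a).
have ut : u + t *: a = u * (1 + t *: (u^-1 * a)).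
  by rewrite mulrDr mulr1 scalerAr mulrA mulrV ?mul1r.
have sub1 (x y : Alg) s : {subset x :: s <= x :: y :: s}.
  by move=> z; rewrite !inE => /orP [->|->]; rewrite ?orbT.
exists (u + t *: a :: A'); split => b; rewrite inE => /predU1P [->|hb].
- by rewrite ut unitrMr.
- exact: A'U.
- have ea : t^-1 *: ((u + t *: a) - u) = a.
    by rewrite addrC addKr scalerA mulVf ?scale1r.
  rewrite -[X in in_span _ X]ea.
  by apply/spanZ/spanB; apply: span_mem; rewrite !inE eqxx ?orbT.
- exact: span_subset (sub1 _ _ _) (spanA _ hb).
- by apply/spanD/spanZ; apply: span_mem; rewrite !inE eqxx ?orbT.
- exact: span_subset (sub1 _ _ _) (spanA' _ hb).
Qed.

Lemma unit_basis_of_perturbable (A : seq Alg) :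
  (exists2 a, a \in A & a \is a GRing.unit) ->
  exists B : seq Alg, [/\ forall b, b \in B -> b \is a GRing.unit,
                          lin_free B & forall x, in_span B x <-> in_span A x].
Proof.
case=> u uA uU; have [A' [A'U spanA spanA']] := unit_perturbation A uU.
have free_nil : lin_free ([::] : seq Alg) by move=> c _ [].
have [B []] := lin_free_extension (u :: A') free_nil.
rewrite cats0 => freeB BA spanB; exists B; split=> // [b /BA|x].
  by rewrite inE => /predU1P [->|/A'U].
have spanuA y : y \in u :: A -> in_span A y.
  by rewrite inE => /predU1P [->|]; apply: span_mem.
split; apply: span_trans => y; last by move/spanA; apply: span_trans.
by move/BA; rewrite inE => /predU1P [->|/spanA']; [apply: span_mem|apply: span_trans].
Qed.

End UnitBasis.

Lemma infinite_field_uniq_seq (k : fieldType) : infinite_field k ->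
  forall m, exists s : seq k, [/\ size s = m, uniq s & 0 \notin s].
Proof.
move=> hk; elim=> [|m [s [sz us s0]]]; first by exists [::].
have [x] := hk (0 :: s); rewrite inE negb_or => /andP [x0 xs].
by exists (x :: s); rewrite /= sz xs us inE negb_or eq_sym x0.
Qed.

Lemma infinite_field_nonroot (k : fieldType) (p : {poly k}) :
  infinite_field k -> p != 0 -> exists2 l : k, l != 0 & ~~ root p l.
Proof.
move=> hk p0; have [s [sz us s0]] := infinite_field_uniq_seq hk (size p).
have /allPn [l ls plN0] : ~~ all (root p) s.
  by apply/negP => /(max_poly_roots p0)/(_ us); rewrite sz ltnn.
by exists l => //; apply: contraNneq s0 => <-.
Qed.

Lemma lin_dep_of_spanning (k : fieldType) (V : lmodType k) (n : nat)
    (v : 'I_n -> V) (u : 'I_n.+1 -> V) :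
  (forall x, exists c : 'I_n -> k, x = \sum_(i < n) c i *: v i) ->
  exists2 x : 'rV[k]_n.+1, x != 0 & \sum_(j < n.+1) x 0 j *: u j = 0.
Proof.
move=> spanv; have [F hF] := fin_all_exists (fun j => spanv (u j)).
pose M : 'M[k]_(n.+1, n) := \matrix_(j, i) F j i.
have : kermx M != 0.
  by rewrite -mxrank_eq0 mxrank_ker subn_eq0 -ltnNge ltnS rank_leq_col.
case/rowV0Pn => x /sub_kermxP xM x0; exists x => //.
transitivity (\sum_(i < n) (x *m M) 0 i *: v i); last first.
  by rewrite xM big1 // => i _; rewrite mxE scale0r.
under eq_bigr do rewrite hF scaler_sumr.
rewrite exchange_big /=; apply: eq_bigr => i _.
rewrite !mxE scaler_suml; apply: eq_bigr => j _.
by rewrite scalerA mxE.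
Qed.

Section Algebraic.
Variables (k : fieldType) (Alg : unitAlgType k).

(* Factor p - p(l) = q ('X - l) and evaluate at w. *)
Lemma unit_subA_of_nonroot (w : Alg) (p : {poly k}) (l : k) :
  horner_alg w p = 0 -> ~~ root p l -> w - l%:A \is a GRing.unit.
Proof.
move=> pw0 plN0.
have /factor_theorem [q hq] : root (p - (p.[l])%:P) l.
  by rewrite rootE hornerD hornerN hornerC subrr.
have eval_hq : horner_alg w (q * ('X - l%:P)) = - (p.[l])%:A.
  by rewrite -hq rmorphB /= horner_algC pw0 sub0r.
have eval_hq' : horner_alg w (('X - l%:P) * q) = - (p.[l])%:A.
  by rewrite mulrC.
move: eval_hq eval_hq'; rewrite !rmorphM /= rmorphB /= horner_algX horner_algC.
move=> hr hl; apply/unitrP; exists (- (p.[l])^-1 *: horner_alg w q).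
rewrite -scalerAr -scalerAl hr hl scalerN scaleNr opprK scalerA mulVf //.
by rewrite scale1r.
Qed.

Lemma unit_perturb_of_unit_subA (w : Alg) (l : k) :
  l != 0 -> w - l%:A \is a GRing.unit ->
  exists2 t : k, t != 0 & 1 + t *: w \is a GRing.unit.
Proof.
move=> l0 wlU; exists (- l^-1); first by rewrite oppr_eq0 invr_eq0.
have -> : 1 + (- l^-1) *: w = (- l^-1) *: (w - l%:A).
  by rewrite scalerBr scalerA mulNr mulVf // scaleN1r opprK addrC.
by rewrite scaler_unit // unitfE oppr_eq0 invr_eq0.
Qed.

Lemma finite_dim_algebraic (w : Alg) : finite_dim Alg ->
  exists2 p : {poly k}, p != 0 & horner_alg w p = 0.
Proof.
case=> n [v spanv]; have [x x0 rel] := lin_dep_of_spanning (fun j => w ^+ j) spanv.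
exists (\poly_(j < n.+1) x 0 (inord j)).
  apply: contra_neq x0 => p0; apply/rowP => j; rewrite !mxE.
  have := congr1 (fun q : {poly k} => q`_j) p0.
  by rewrite /= coef_poly ltn_ord coef0 inord_val.
rewrite poly_def raddf_sum /= -[RHS]rel; apply: eq_bigr => j _.
by rewrite linearZ /= rmorphXn /= horner_algX mulr_algl inord_val.
Qed.

Lemma finite_dim_unit_perturbable :
  infinite_field k -> finite_dim Alg -> unit_perturbable Alg.
Proof.
move=> hk hfd w; have [p p0 pw0] := finite_dim_algebraic w hfd.
have [l l0 plN0] := infinite_field_nonroot hk p0.
exact/(unit_perturb_of_unit_subA l0)/(unit_subA_of_nonroot pw0).
Qed.

End Algebraic.

Lemma count_exists_le_sum (T : Type) (n : nat) (P : 'I_n -> pred T) (s : seq T) :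
  (count (fun t => [exists i, P i t]) s <= \sum_(i < n) count (P i) s)%N.
Proof.
elim: s => [|t s IH] /=; first by rewrite big1.
rewrite big_split /= leq_add //.
by case: existsP => [[i Pit]|//]; rewrite (bigD1 i) //= Pit.
Qed.

Lemma count_le1 (T : eqType) (P : pred T) (s : seq T) : uniq s ->
  {in s &, forall x y, P x -> P y -> x = y} -> (count P s <= 1)%N.
Proof.
move=> us Puniq; rewrite -size_filter.
case Es: (filter P s) => [//|x r]; rewrite -Es.
have : x \in filter P s by rewrite Es mem_head.
rewrite mem_filter => /andP [Px xs].
apply: (uniq_leq_size (s2 := [:: x])); first exact: filter_uniq.
by move=> y; rewrite mem_filter inE => /andP [Py ys]; apply/eqP/Puniq.
Qed.

Lemma exists_avoid_all (T : eqType) (n : nat) (P : 'I_n -> pred T) (s : seq T) :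
  uniq s -> (n < size s)%N ->
  (forall i, {in s &, forall x y, P i x -> P i y -> x = y}) ->
  exists2 t, t \in s & forall i, ~~ P i t.
Proof.
move=> us ns Puniq.
have /ltn_eqF : (count (fun t => [exists i, P i t]) s < size s)%N.
  apply: leq_ltn_trans (count_exists_le_sum P s) (leq_trans _ ns).
  rewrite ltnS (@leq_trans (\sum_(i < n) 1)) //; last by rewrite sum1_card card_ord.
  by apply: leq_sum => i _; apply: count_le1.
rewrite -all_count => /negbT /allPn [t ts].
by rewrite negb_exists => /forallP; exists t.
Qed.

Lemma one_addZ_eq0_inj (k : fieldType) (K : lalgType k) (y : K) (t t' : k) :
  1 + t *: y = 0 -> 1 + t' *: y = 0 -> t = t'.
Proof.
move=> ht ht'; have : (t - t') *: y = (1 + t *: y) - (1 + t' *: y).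
  by rewrite scalerBl opprD addrACA subrr add0r.
rewrite ht ht' subrr => /eqP; rewrite scaler_eq0 subr_eq0 => /orP [/eqP //|/eqP y0].
by move: ht; rewrite y0 scaler0 addr0 => /eqP; rewrite oner_eq0.
Qed.

Section ProductOfFields.
Variables (k : fieldType) (Alg : unitAlgType k).
Variables (n : nat) (K : 'I_n -> comUnitAlgType k) (f : Alg -> forall i, K i).
Hypothesis K_field : forall i (x : K i), x != 0 -> x \is a GRing.unit.
Hypothesis fD : forall x y i, f (x + y) i = f x i + f y i.
Hypothesis fM : forall x y i, f (x * y) i = f x i * f y i.
Hypothesis fZ : forall (c : k) x i, f (c *: x) i = c *: f x i.
Hypothesis f1 : forall i, f 1 i = 1.
Hypothesis f_inj : forall x y, (forall i, f x i = f y i) -> x = y.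
Hypothesis f_surj : forall g : forall i, K i, exists x, forall i, f x i = g i.

Lemma unit_of_components (x : Alg) : (forall i, f x i != 0) -> x \is a GRing.unit.
Proof.
move=> fx0; have [y fy] := f_surj (fun i => (f x i)^-1).
apply/unitrP; exists y; split; apply: f_inj => i; rewrite fM fy f1.
  by rewrite mulVr ?K_field.
by rewrite mulrV ?K_field.
Qed.

Lemma components_unit_perturbable : infinite_field k -> unit_perturbable Alg.
Proof.
move=> hk w; have [s [sz us s0]] := infinite_field_uniq_seq hk n.+1.
pose P i t := f (1 + t *: w) i == 0.
have fE t i : f (1 + t *: w) i = 1 + t *: f w i by rewrite fD f1 fZ.
have Puniq i : {in s &, forall t t', P i t -> P i t' -> t = t'}.
  move=> t t' _ _; rewrite /P !fE => /eqP ht /eqP ht'.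
  exact: one_addZ_eq0_inj ht ht'.
have [|t ts tgood] := exists_avoid_all us _ Puniq; first by rewrite sz.
exists t; first by apply: contraNneq s0 => <-.
exact: unit_of_components.
Qed.

End ProductOfFields.

Lemma prod_field_ext_unit_perturbable (k : fieldType) (Alg : unitAlgType k) :
  infinite_field k -> prod_field_ext Alg -> unit_perturbable Alg.
Proof.
move=> hk [n [K [f [K_field [fD [fM [fZ [f1 [f_inj f_surj]]]]]]]]].
exact: (components_unit_perturbable K_field fD fM fZ f1 f_inj f_surj).
Qed.

Lemma k_is_R_or_C_abs (k : fieldType) (R : realType) (absk : k -> R) :
  k_is_R_or_C absk ->
  [/\ absk 0 = 0, absk (-1) = 1 &
      forall r : R, 0 < r -> exists2 t : k, t != 0 & absk t = r].
Proof.
case=> [[phi [[g phiK gK] ha]] | [psi [[g psiK gK] ha]]].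
  split; [by rewrite ha rmorph0 normr0 | by rewrite ha rmorphN1 normrN normr1|].
  move=> r r0; exists (g r); last by rewrite ha gK gtr0_norm.
  by apply: contraTneq r0 => gr0; rewrite -(gK r) gr0 rmorph0 ltxx.
split.
- by rewrite ha rmorph0 /cmod /= expr0n addr0 sqrtr0.
- by rewrite ha rmorphN1 /cmod /= oppr0 expr0n addr0 sqrrN expr1n sqrtr1.
move=> r r0; exists (g r%:C%C); last first.
  by rewrite ha gK /cmod /= expr0n addr0 sqrtr_sqr gtr0_norm.
apply: contraTneq r0 => gr0.
have := congr1 (@complex.Re R) (gK r%:C%C).
by rewrite gr0 rmorph0 /= => <-; rewrite ltxx.
Qed.

Section Vanishing.
Variable R : archiRealFieldType.

Definition vanishing (a : nat -> R) :=
  forall e : R, 0 < e -> exists M, forall n, (M <= n)%N -> a n < e.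

Lemma vanishing_le (a b : nat -> R) :
  (forall n, a n <= b n) -> vanishing b -> vanishing a.
Proof. by move=> ab vb e /vb [M hM]; exists M => n /hM; apply: le_lt_trans. Qed.

Lemma vanishingD (a b : nat -> R) :
  vanishing a -> vanishing b -> vanishing (fun n => a n + b n).
Proof.
move=> va vb e e0; have e2 : 0 < e / 2 by rewrite divr_gt0.
have [Ma ha] := va _ e2; have [Mb hb] := vb _ e2; exists (maxn Ma Mb) => n.
rewrite geq_max => /andP [/ha an /hb bn].
by rewrite [e]splitr ltrD.
Qed.

Lemma vanishingZ (c : R) (a : nat -> R) : 0 <= c ->
  (forall n, 0 <= a n) -> vanishing a -> vanishing (fun n => c * a n).
Proof.
move=> c0 a0 va e e0; have c1 : 0 < c + 1 by rewrite ltr_wpDl.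
have [M hM] := va _ (divr_gt0 e0 c1); exists M => n /hM an.
apply: le_lt_trans (_ : (c + 1) * a n < e).
  by rewrite ler_wpM2r // lerDl.
by rewrite mulrC -ltr_pdivlMr.
Qed.

Lemma vanishing_geometric (a : R) : vanishing (fun n => a * 2^-1 ^+ n).
Proof.
move=> e e0; have [a0|a0] := leP a 0.
  exists 0%N => n _; apply: le_lt_trans _ e0.
  by rewrite mulr_le0_ge0 // exprn_ge0 // invr_ge0.
exists (Num.bound (a / e)) => n hn.
have ae_lt_n : a / e < n%:R.
  by apply: lt_le_trans (archi_boundP _) _; rewrite ?ler_nat // divr_ge0 ?ltW.
have n_lt_2n : n%:R < 2 ^+ n :> R by rewrite -natrX ltr_nat ltn_expl.
rewrite exprVn ltr_pdivrMr ?exprn_gt0 // mulrC -ltr_pdivrMr //.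
exact: lt_trans n_lt_2n.
Qed.

End Vanishing.

Section Neumann.
Variables (k : fieldType) (Alg : unitAlgType k) (R : archiRealFieldType) (N : Alg -> R).
Hypothesis Nge0 : forall x, 0 <= N x.
Hypothesis N_eq0 : forall x, N x = 0 -> x = 0.
Hypothesis Ntri : forall x y, N (x + y) <= N x + N y.
Hypothesis NN : forall x, N (- x) = N x.
Hypothesis N0 : N 0 = 0.
Hypothesis NM : forall x y, N (x * y) <= N x * N y.
Hypothesis Ncomplete : forall u : nat -> Alg,
  (forall e : R, 0 < e -> exists M, forall m n, (M <= m)%N -> (M <= n)%N ->
     N (u m - u n) < e) ->
  exists l : Alg, forall e : R, 0 < e -> exists M, forall n, (M <= n)%N ->
     N (u n - l) < e.

Lemma eq0_of_N_le_vanishing (z : Alg) (a : nat -> R) :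
  (forall n, N z <= a n) -> vanishing a -> z = 0.
Proof.
move=> za va; apply: N_eq0; apply/eqP; rewrite eq_le Nge0 andbT leNgt.
by apply/negP => /va [M /(_ M (leqnn M))]; apply/negP; rewrite -leNgt.
Qed.

Lemma N_distC (x y : Alg) : N (x - y) = N (y - x).
Proof. by rewrite -NN opprB. Qed.

Variable b : Alg.
Hypothesis Nb : N b <= 2^-1.

Let S n := \sum_(j < n) b ^+ j.

Lemma N_expr_le j : N (b ^+ j) <= N 1 * 2^-1 ^+ j.
Proof.
elim: j => [|j IH]; first by rewrite !expr0 mulr1.
rewrite exprS; apply: le_trans (NM _ _) _.
by rewrite exprS mulrCA; apply: ler_pM.
Qed.

Lemma N_partial_sum_shift n d :
  N (S (n + d) - S n) <= 2 * N 1 * (2^-1 ^+ n - 2^-1 ^+ (n + d)).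
Proof.
elim: d => [|d IH]; first by rewrite addn0 !subrr N0 mulr0.
rewrite addnS /S big_ord_recr /= -/(S (n + d)) addrAC.
apply: le_trans (Ntri _ _) _; apply: le_trans (lerD IH (N_expr_le _)) _.
by rewrite exprS le_eqVlt; apply/orP; left; apply/eqP; field.
Qed.

Lemma N_partial_sum_sub m n : (n <= m)%N -> N (S m - S n) <= 2 * N 1 * 2^-1 ^+ n.
Proof.
move/subnKC <-; apply: le_trans (N_partial_sum_shift _ _) _.
by rewrite ler_wpM2l ?mulr_ge0 // gerBl exprn_ge0 // invr_ge0.
Qed.

Lemma partial_sum_cvg : exists l, vanishing (fun n => N (S n - l)).
Proof.
apply: Ncomplete => e /(vanishing_geometric (2 * N 1)) [M hM].
exists M => m n hm hn; have [le_nm|/ltnW le_mn] := leqP n m.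
  exact: le_lt_trans (N_partial_sum_sub le_nm) (hM _ hn).
by rewrite N_distC; apply: le_lt_trans (N_partial_sum_sub le_mn) (hM _ hm).
Qed.

Lemma neumann_unit : (1 - b) \is a GRing.unit.
Proof.
have [l Sl] := partial_sum_cvg.
have tele_l n : (1 - b) * S n = 1 - b ^+ n by rewrite -opprB mulNr -subrX1 opprB.
have tele_r n : S n * (1 - b) = 1 - b ^+ n.
  rewrite -tele_l; apply: commrB; first exact: commr1.
  by apply/commr_sym/commr_sum => j _; apply/commrX/commr_refl.
have tail z : (forall n, N z <= N (1 - b) * N (S n - l) + N (b ^+ n)) -> z = 0.
  move=> hz; apply: (@eq0_of_N_le_vanishing z
    (fun n => N (1 - b) * N (S n - l) + N 1 * 2^-1 ^+ n)).
    by move=> n; apply: le_trans (hz n) _; rewrite lerD2l N_expr_le.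
  exact: vanishingD (vanishingZ (Nge0 _) (fun=> Nge0 _) Sl) (vanishing_geometric _).
apply/unitrP; exists l; split; apply/eqP; rewrite -subr_eq0; apply/eqP/tail => n.
  have -> : l * (1 - b) - 1 = (l - S n) * (1 - b) - b ^+ n.
    by rewrite mulrBl tele_r opprB addrAC addrA subrK.
  apply: le_trans (Ntri _ _) _; rewrite NN lerD2r [N (S n - l)]N_distC mulrC; exact: NM.
have -> : (1 - b) * l - 1 = (1 - b) * (l - S n) - b ^+ n.
  by rewrite mulrBr tele_l opprB addrAC addrA subrK.
apply: le_trans (Ntri _ _) _; rewrite NN lerD2r [N (S n - l)]N_distC; exact: NM.
Qed.

End Neumann.

Lemma banach_unit_perturbable (k : fieldType) (Alg : unitAlgType k) :
  banach_algebra Alg -> unit_perturbable Alg.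
Proof.
move=> [R [absk [N [RC [Nge0 [N_eq0 [Ntri [NZ [NM Ncomplete]]]]]]]]] w.
have [abs0 absN1 abs_surj] := k_is_R_or_C_abs RC.
have NN x : N (- x) = N x by rewrite -scaleN1r NZ absN1 mul1r.
have N0 : N 0 = 0 by rewrite -(scale0r (0 : Alg)) NZ abs0 mul0r.
have Nw2 : 0 < 2 * (N w + 1) by rewrite pmulr_rgt0 ?ltr_wpDl.
have r0 : 0 < (2 * (N w + 1))^-1 by rewrite invr_gt0.
have [t t0 abst] := abs_surj _ r0; exists t => //.
rewrite -[t *: w]opprK; apply: (neumann_unit Nge0 N_eq0 Ntri NN N0 NM Ncomplete).
rewrite NN NZ abst ler_pdivrMl //; have := Nge0 w; lra.
Qed.

Theorem proposition2p6 (k : fieldType) (Alg : unitAlgType k)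
    (hk : infinite_field k) (hs : Hs Alg) (A : seq Alg)
    (hA : exists2 a, a \in A & a \is a GRing.unit) :
  exists B : seq Alg,
    (forall b, b \in B -> b \is a GRing.unit) /\
    lin_free B /\
    (forall x : Alg, in_span B x <-> in_span A x).
Proof.
have perturbable : unit_perturbable Alg.
  case: hs => [fd | [banach | prod]].
  - exact: finite_dim_unit_perturbable.
  - exact: banach_unit_perturbable.
  - exact: prod_field_ext_unit_perturbable.
by have [B [BU freeB spanB]] := unit_basis_of_perturbable perturbable hA; exists B.
Qed.
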